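(* Let $G=(V,E)$ be an $S$-regular graph on $n$ vertices with cells $V_1,\dots,V_k$, $n_i=|V_i|$, and let $B,C\subseteq V$. Write $B_i=B\cap V_i$, $C_j=C\cap V_j$, $c_i=|C_i|/n_i$ and $b=|B|/n$. Then \[\Bigl|\,|E(B,C)|-\sum_{i=1}^k\sum_{j=1}^k\sqrt{\tfrac{s_{ij}s_{ji}}{n_in_j}}\,|B_i||C_j|\,\Bigr|\le\lambda_B\, n\Bigl(b\sum_{i=1}^k c_i(1-c_i)\Bigr)^{1/2}.\]
   Context: All graphs are simple, undirected and connected. $G$ is $S$-regular ($S=(s_{ij})$ a $k\times k$ nonnegative integer matrix) if $V$ is partitioned into nonempty cells $V_1,\dots,V_k$ such that every vertex of $V_i$ has exactly $s_{ij}$ neighbours in $V_j$. $|E(B,C)|$ denotes the number of pairs $(u,v)\in B\times C$ with $uv\in E$ (i.e. $\mathbf{1}_B^TA\mathbf{1}_C$, $A$ the adjacency matrix). The subspace $W=\mathrm{span}\{\mathbf{1}_{V_1},\dots,\mathbf{1}_{V_k}\}$ is $A$-invariant with eigenvalues on $W$ equal to those of $S$; the eigenvalues of $A$ on $W^\perp$ are the bulk eigenvalues (assume $n>k$), and $\lambda_B$ is the largest absolute value of a bulk eigenvalue. *)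

From mathcomp Require Import all_boot all_order all_algebra.
Set Implicit Arguments. Unset Strict Implicit. Unset Printing Implicit Defensive.
Import Order.TTheory GRing.Theory Num.Theory.
Local Open Scope ring_scope.

Definition simple_connected_graph n (adj : rel 'I_n) : Prop :=
  symmetric adj /\ irreflexive adj /\ (forall u v, connect adj u v).

Definition cellset n k (cell : 'I_n -> 'I_k) (j : 'I_k) : {set 'I_n} :=
  [set v | cell v == j].

Definition S_regular n k (adj : rel 'I_n) (cell : 'I_n -> 'I_k)
    (S : 'M[nat]_k) : Prop :=
  (forall j : 'I_k, cellset cell j != set0) /\
  (forall (v : 'I_n) (j : 'I_k),
      #|[set u in cellset cell j | adj v u]| = S (cell v) j).

Definition adjmx (R : nzRingType) n (adj : rel 'I_n) : 'M[R]_n :=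
  \matrix_(i, j) (adj i j)%:R.

Definition indic (R : nzRingType) n (X : {set 'I_n}) : 'cV[R]_n :=
  \col_i (i \in X)%:R.

(* l is a bulk eigenvalue: eigenvalue of A on W^perp,
   W = span{1_{V_1},...,1_{V_k}} *)
Definition bulk_eigenvalue (R : nzRingType) n k (adj : rel 'I_n)
    (cell : 'I_n -> 'I_k) (l : R) : Prop :=
  exists x : 'cV[R]_n,
    [/\ x != 0,
        (forall j : 'I_k, (indic R (cellset cell j))^T *m x = 0) &
        adjmx R adj *m x = l *: x].

Definition nE n (adj : rel 'I_n) (B C : {set 'I_n}) : nat :=
  #|[set p : 'I_n * 'I_n | [&& p.1 \in B, p.2 \in C & adj p.1 p.2]]|.

From mathcomp Require Import all_boot all_order all_algebra.
From mathcomp Require Import complex ring.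
Set Implicit Arguments. Unset Strict Implicit. Unset Printing Implicit Defensive.
Import Order.TTheory GRing.Theory Num.Theory.
Local Open Scope ring_scope.

(* Split 1_B and 1_C into their cellwise averages, which lie in W, and
   components x_B, x_C in W^perp.  The adjacency matrix A maps W into W and,
   being symmetric, W^perp into W^perp, so the cross terms of 1_B^T A 1_C
   vanish: the W-part is the double sum (as n_i s_ij = n_j s_ji) and the rest
   is x_B^T A x_C.  Cauchy-Schwarz, |A x_C| <= lamB |x_C| on W^perp,
   |x_B|^2 <= |B| and |x_C|^2 = sum_i n_i c_i (1 - c_i) conclude.  The norm
   bound on W^perp comes from the spectral theorem over R[i]: an eigenvector
   of A not orthogonal to x_C yields, after taking its real or imaginary part
   and projecting it onto W^perp, a bulk eigenvector for the same eigenvalue. *)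

Section SpectralBound.
Local Open Scope sesquilinear_scope.

Lemma unitary_sqr_norm (C : numClosedFieldType) n (P : 'M[C]_n) (w : 'cV_n) :
  P \is unitarymx -> (P^t* *m w)^t* *m (P^t* *m w) = w^t* *m w.
Proof.
move=> /unitarymxP PPt.
by rewrite trmx_mul map_mxM trmxCK mulmxA -(mulmxA _ P) PPt mulmx1.
Qed.

Lemma hermitian_sqr_norm_le (C : numClosedFieldType) n (A : 'M[C]_n)
    (x : 'cV_n) (lam : C) :
  A \is hermsymmx ->
  (forall (p : 'rV_n) (r : C), r \is Num.real -> p *m A = r *: p ->
     (p *m x) 0 0 != 0 -> `|r| <= lam) ->
  ((A *m x)^t* *m (A *m x)) 0 0 <= lam ^+ 2 * (x^t* *m x) 0 0.
Proof.
move=> hermA eigen_le.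
set P := spectralmx A; set d := spectral_diag A; set y := P *m x.
have P_unitary : P \is unitarymx := spectral_unitarymx A.
have A_diag : A = P^t* *m diag_mx d *m P.
  by rewrite -invmx_unitary //; apply/orthomx_spectralP/hermitian_normalmx.
have PA : P *m A = diag_mx d *m P.
  by rewrite A_diag !mulmxA (unitarymxP P_unitary) mul1mx.
have -> : A *m x = P^t* *m (diag_mx d *m y) by rewrite A_diag /y !mulmxA.
have -> : x = P^t* *m y.
  by rewrite /y mulmxA -invmx_unitary // mulVmx ?spectral_unit ?mul1mx.
have Px : P *m x = y by [].
clearbody y.
rewrite !unitary_sqr_norm // mul_diag_mx !mxE mulr_sumr; apply: ler_sum => i _.
rewrite !mxE -!normCKC normrM exprMn.
have [-> | y_i_neq0] := eqVneq (y i 0) 0; first by rewrite normr0 expr0n !mulr0.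
apply: ler_wpM2r; first exact: exprn_ge0.
have d_real : d 0 i \is Num.real by exact/mxOverP/hermitian_spectral_diag_real.
have eigen_i : row i P *m A = d 0 i *: row i P.
  by rewrite -row_mul PA row_mul row_diag_mx -scalemxAl -rowE.
have d_le : `|d 0 i| <= lam.
  by apply: (eigen_le _ _ d_real eigen_i); rewrite -row_mul Px mxE.
by apply: lerXn2r; rewrite // nnegrE ?(le_trans _ d_le).
Qed.

End SpectralBound.

Section RealSymmetric.
Local Open Scope sesquilinear_scope.
Variable R : rcfType.
Local Open Scope complex_scope.
Local Notation cmx M := (map_mx (real_complex R) M).

Lemma map_Re_mulmx_real m n p (M : 'M[R[i]]_(m, n)) (N : 'M[R]_(n, p)) :
  map_mx (@complex.Re R) (M *m cmx N) = map_mx (@complex.Re R) M *m N.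
Proof.
apply/matrixP => i j; rewrite !mxE raddf_sum; apply: eq_bigr => l _.
by rewrite !mxE; case: (M i l) => a b /=; rewrite mulr0 subr0.
Qed.

Lemma map_Im_mulmx_real m n p (M : 'M[R[i]]_(m, n)) (N : 'M[R]_(n, p)) :
  map_mx (@complex.Im R) (M *m cmx N) = map_mx (@complex.Im R) M *m N.
Proof.
apply/matrixP => i j; rewrite !mxE raddf_sum; apply: eq_bigr => l _.
by rewrite !mxE; case: (M i l) => a b /=; rewrite mulr0 add0r.
Qed.

Lemma map_Re_scale_real m n (t : R) (M : 'M[R[i]]_(m, n)) :
  map_mx (@complex.Re R) (t%:C *: M) = t *: map_mx (@complex.Re R) M.
Proof.
by apply/matrixP => i j; rewrite !mxE; case: (M i j) => a b /=; rewrite mul0r subr0.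
Qed.

Lemma map_Im_scale_real m n (t : R) (M : 'M[R[i]]_(m, n)) :
  map_mx (@complex.Im R) (t%:C *: M) = t *: map_mx (@complex.Im R) M.
Proof.
by apply/matrixP => i j; rewrite !mxE; case: (M i j) => a b /=; rewrite mul0r addr0.
Qed.

Lemma symmetric_sqr_norm_le n (A : 'M[R]_n) (x : 'cV_n) (lam : R) :
  A^T = A ->
  (forall (p : 'rV_n) (r : R), p *m A = r *: p -> (p *m x) 0 0 != 0 -> `|r| <= lam) ->
  ((A *m x)^T *m (A *m x)) 0 0 <= lam ^+ 2 * (x^T *m x) 0 0.
Proof.
move=> symA eigen_le.
have conj_cmx m n' (M : 'M[R]_(m, n')) : (cmx M)^t* = cmx M^T.
  by apply/matrixP => i j; rewrite !mxE conj_Creal ?complex_real.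
have hermA : cmx A \is hermsymmx.
  by apply/is_hermitianmxP; rewrite expr0 scale1r conj_cmx symA.
have := @hermitian_sqr_norm_le _ _ _ (cmx x) lam%:C hermA.
rewrite -map_mxM !conj_cmx -!map_mxM !mxE -rmorphXn -rmorphM lecR; apply.
move=> p r /complex_realP [t ->] eig_p p_x_neq0.
set a := map_mx (@complex.Re R) p; set b := map_mx (@complex.Im R) p.
have [q [eig_q q_x_neq0]] : exists q : 'rV_n, q *m A = t *: q /\ (q *m x) 0 0 != 0.
  have [a_x0 | ] := eqVneq ((a *m x) 0 0) 0; last first.
    by exists a; rewrite -map_Re_mulmx_real eig_p map_Re_scale_real.
  have [b_x0 | ] := eqVneq ((b *m x) 0 0) 0; last first.
    by exists b; rewrite -map_Im_mulmx_real eig_p map_Im_scale_real.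
  move: p_x_neq0 a_x0 b_x0; rewrite /a /b -map_Re_mulmx_real -map_Im_mulmx_real !mxE.
  by case: (\sum_j _) => u v /= + u0 v0; rewrite u0 v0 eqxx.
by rewrite normc_def /= expr0n addr0 sqrtr_sqr lecR (eigen_le q).
Qed.

End RealSymmetric.

Lemma CauchySchwarz_sum (R : realDomainType) (I : finType) (a b : I -> R) :
  (\sum_i a i * b i) ^+ 2 <= (\sum_i a i ^+ 2) * (\sum_i b i ^+ 2).
Proof.
set Saa := \sum_i a i ^+ 2; set Sbb := \sum_i b i ^+ 2; set Sab := \sum_i a i * b i.
have lagrange : \sum_i \sum_j (a i * b j - a j * b i) ^+ 2 = 2%:R * (Saa * Sbb - Sab ^+ 2).
  rewrite (eq_bigr (fun i => a i ^+ 2 * Sbb + b i ^+ 2 * Saa - 2%:R * (a i * b i) * Sab)).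
    by rewrite sumrB big_split /= -!mulr_suml -mulr_sumr -/Saa -/Sab -/Sbb; ring.
  move=> i _; rewrite /Sbb /Saa /Sab !mulr_sumr -!big_split -sumrB /=.
  by apply: eq_bigr => j _; ring.
have : 0 <= \sum_i \sum_j (a i * b j - a j * b i) ^+ 2.
  by apply: sumr_ge0 => i _; apply: sumr_ge0 => j _; apply: sqr_ge0.
by rewrite lagrange pmulr_rge0 ?ltr0n // subr_ge0.
Qed.

Section Cells.
Variables (n k : nat) (cell : 'I_n -> 'I_k).

Definition cell_centered (R : nmodType) (x : 'I_n -> R) : Prop :=
  forall j, \sum_(u | cell u == j) x u = 0.

Lemma sum_by_cell (R : nmodType) (F : 'I_n -> R) :
  \sum_u F u = \sum_j \sum_(u | cell u == j) F u.
Proof. exact: partition_big. Qed.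

Lemma sum_cell_const (R : nmodType) j (c : R) :
  \sum_(u | cell u == j) c = c *+ #|cellset cell j|.
Proof.
by rewrite -sumr_const; apply: eq_bigl => u; rewrite inE.
Qed.

Lemma sum_cell_indicator (R : pzSemiRingType) (X : {set 'I_n}) j :
  \sum_(u | cell u == j) ((u \in X)%:R : R) = #|X :&: cellset cell j|%:R.
Proof.
rewrite -sum1_card natr_sum big_mkcond [RHS]big_mkcond /=; apply: eq_bigr => u _.
by rewrite !inE; case: (cell u == j); case: (u \in X); rewrite ?andbF.
Qed.

Lemma centered_orthogonal (R : pzRingType) (x : 'I_n -> R) (g : 'I_k -> R) :
  cell_centered x -> \sum_u x u * g (cell u) = 0.
Proof.
move=> x_centered; rewrite sum_by_cell; apply: big1 => j _.
by rewrite (eq_bigr (fun u => x u * g j)) => [|u /eqP->]; rewrite // -mulr_suml x_centered mul0r.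
Qed.

Hypothesis cell_nonempty : forall j, cellset cell j != set0.

Lemma cell_size_neq0 (R : numDomainType) j : (#|cellset cell j|%:R : R) != 0.
Proof. by rewrite pnatr_eq0 -lt0n card_gt0. Qed.

Definition cell_mean (R : numFieldType) (x : 'I_n -> R) (j : 'I_k) : R :=
  (\sum_(u | cell u == j) x u) / #|cellset cell j|%:R.

Definition cell_center (R : numFieldType) (x : 'I_n -> R) (u : 'I_n) : R :=
  x u - cell_mean x (cell u).

Lemma cell_center_centered (R : numFieldType) (x : 'I_n -> R) :
  cell_centered (cell_center x).
Proof.
move=> j; rewrite sumrB [X in _ - X](eq_bigr (fun _ => cell_mean x j)) => [|u /eqP->] //.
by rewrite sum_cell_const -mulr_natr /cell_mean divfK ?subrr ?cell_size_neq0.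
Qed.

Lemma cell_const_centered (R : numFieldType) (h : 'I_k -> R) :
  cell_centered (fun u => h (cell u)) -> forall j, h j = 0.
Proof.
move=> h_centered j; have := h_centered j.
rewrite (eq_bigr (fun _ => h j)) => [|u /eqP->] //.
by rewrite sum_cell_const -mulr_natr => /eqP; rewrite mulf_eq0 (negbTE (cell_size_neq0 _ j)) orbF => /eqP.
Qed.

Definition cell_density (R : numFieldType) (X : {set 'I_n}) (j : 'I_k) : R :=
  #|X :&: cellset cell j|%:R / #|cellset cell j|%:R.

Lemma cell_mean_indicator (R : numFieldType) (X : {set 'I_n}) :
  cell_mean (fun u => (u \in X)%:R) =1 cell_density R X.
Proof. by move=> j; rewrite /cell_mean sum_cell_indicator. Qed.

Lemma sum_sqr_center_indicator (R : numFieldType) (X : {set 'I_n}) :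
  \sum_u cell_center (fun u => (u \in X)%:R) u ^+ 2 =
  \sum_j #|X :&: cellset cell j|%:R * (1 - cell_density R X j).
Proof.
rewrite sum_by_cell; apply: eq_bigr => j _.
rewrite (eq_bigr (fun u => (u \in X)%:R * (1 - 2%:R * cell_density R X j) + cell_density R X j ^+ 2)).
  rewrite big_split /= -mulr_suml sum_cell_indicator sum_cell_const -mulr_natr /cell_density.
  by field; rewrite cell_size_neq0.
by move=> u /eqP cell_u; rewrite /cell_center cell_mean_indicator cell_u; case: (u \in X) => /=; ring.
Qed.

Lemma cell_density_var_ge0 (R : realFieldType) (X : {set 'I_n}) j :
  0 <= cell_density R X j * (1 - cell_density R X j).
Proof.
have Nj_gt0 : 0 < #|cellset cell j|%:R :> R by rewrite lt0r cell_size_neq0 ler0n.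
rewrite mulr_ge0 ?subr_ge0 ?divr_ge0 ?ler0n // ler_pdivrMr // mul1r ler_nat.
exact/subset_leq_card/subsetIr.
Qed.

Lemma sum_sqr_center_indicator_le_card (R : realFieldType) (X : {set 'I_n}) :
  \sum_u cell_center (fun u => (u \in X)%:R) u ^+ 2 <= #|X|%:R :> R.
Proof.
have -> : #|X|%:R = \sum_u ((u \in X)%:R : R).
  by rewrite -sum1_card natr_sum big_mkcond; apply: eq_bigr => u _; case: (u \in X).
rewrite sum_sqr_center_indicator sum_by_cell; apply: ler_sum => j _.
rewrite sum_cell_indicator mulrBr mulr1 gerDl oppr_le0.
by rewrite mulr_ge0 ?divr_ge0 ?ler0n.
Qed.

Lemma sum_sqr_center_indicator_le (R : realFieldType) (X : {set 'I_n}) :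
  \sum_u cell_center (fun u => (u \in X)%:R) u ^+ 2
  <= n%:R * \sum_j cell_density R X j * (1 - cell_density R X j).
Proof.
rewrite sum_sqr_center_indicator mulr_sumr; apply: ler_sum => j _.
have -> : #|X :&: cellset cell j|%:R * (1 - cell_density R X j)
          = #|cellset cell j|%:R * (cell_density R X j * (1 - cell_density R X j)).
  by rewrite /cell_density; field; rewrite cell_size_neq0.
apply: ler_wpM2r; first exact: cell_density_var_ge0.
by rewrite ler_nat -[leqRHS]card_ord max_card.
Qed.

End Cells.

Definition nbr_sum (R : pzSemiRingType) n (adj : rel 'I_n) (x : 'I_n -> R) (v : 'I_n) : R :=
  \sum_w (adj v w)%:R * x w.

Section SRegularGraph.
Variables (n k : nat) (adj : rel 'I_n) (cell : 'I_n -> 'I_k).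

Lemma nE_nbr_sum (R : pzSemiRingType) (B C : {set 'I_n}) :
  (nE adj B C)%:R = \sum_u (u \in B)%:R * nbr_sum adj (fun v => (v \in C)%:R) u :> R.
Proof.
rewrite /nE -sum1dep_card natr_sum (eq_bigr (fun u => \sum_v ((u \in B) && (v \in C) && adj u v)%:R)).
  rewrite pair_big big_mkcond /=; apply: eq_bigr => -[u v] _ /=.
  by case: (u \in B); case: (v \in C); case: (adj u v).
move=> u _; rewrite mulr_sumr; apply: eq_bigr => v _.
by rewrite -!natrM; case: (u \in B); case: (v \in C); case: (adj u v).
Qed.

Lemma nbr_sumB (R : pzRingType) (x y : 'I_n -> R) v :
  nbr_sum adj (fun w => x w - y w) v = nbr_sum adj x v - nbr_sum adj y v.
Proof. by rewrite /nbr_sum -sumrB; apply: eq_bigr => w _; rewrite mulrBr. Qed.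

Lemma bulk_eigenvalue_of_fun (R : nzRingType) (r : R) (z : 'I_n -> R) :
  (forall v, nbr_sum adj z v = r * z v) -> cell_centered cell z -> (exists v, z v != 0) ->
  bulk_eigenvalue adj cell r.
Proof.
move=> z_eigen z_centered [v0 z_v0]; exists (\col_v z v); split.
- by apply: contraNneq z_v0 => /colP/(_ v0); rewrite !mxE => /eqP.
- move=> j; apply/matrixP => a b; rewrite !mxE -[RHS](z_centered j) [RHS]big_mkcond /=.
  by apply: eq_bigr => w _; rewrite !mxE inE; case: (cell w == j); rewrite ?mul1r ?mul0r.
- by apply/matrixP => a b; rewrite !mxE -z_eigen; apply: eq_bigr => w _; rewrite !mxE.
Qed.

Variable S : 'M[nat]_k.
Hypotheses (adj_sym : symmetric adj) (Sreg : S_regular adj cell S).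

Lemma sum_cell_adj (R : pzSemiRingType) v j :
  \sum_(u | cell u == j) (adj v u)%:R = (S (cell v) j)%:R :> R.
Proof.
rewrite -Sreg.2 -sum1_card natr_sum big_mkcond [RHS]big_mkcond /=; apply: eq_bigr => u _.
by rewrite !inE; case: (cell u == j); case: (adj v u).
Qed.

Lemma nbr_sum_cell (R : pzSemiRingType) (h : 'I_k -> R) v :
  nbr_sum adj (fun w => h (cell w)) v = \sum_j (S (cell v) j)%:R * h j.
Proof.
rewrite /nbr_sum (sum_by_cell cell); apply: eq_bigr => j _.
rewrite (eq_bigr (fun u => (adj v u)%:R * h j)) => [|u /eqP->] //.
by rewrite -mulr_suml sum_cell_adj.
Qed.

Lemma nbr_sum_centered (R : pzRingType) (x : 'I_n -> R) :
  cell_centered cell x -> cell_centered cell (nbr_sum adj x).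
Proof.
move=> x_centered j; rewrite /nbr_sum exchange_big /=.
rewrite (eq_bigr (fun w => x w * (S (cell w) j)%:R)).
  exact: centered_orthogonal (fun i => (S i j)%:R) x_centered.
move=> w _; rewrite -sum_cell_adj mulr_sumr; apply: eq_bigr => v _.
by rewrite mulr_natl mulr_natr adj_sym.
Qed.

Lemma cell_size_mulS (R : pzSemiRingType) i j :
  #|cellset cell i|%:R * (S i j)%:R = #|cellset cell j|%:R * (S j i)%:R :> R.
Proof.
have edges i' j' : \sum_(u | cell u == i') \sum_(v | cell v == j') (adj u v)%:R
                   = #|cellset cell i'|%:R * (S i' j')%:R :> R.
  rewrite mulr_natl -sum_cell_const.
  by apply: eq_bigr => u /eqP <-; rewrite sum_cell_adj.
rewrite -!edges exchange_big /=.
by apply: eq_bigr => v _; apply: eq_bigr => u _; rewrite adj_sym.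
Qed.

Lemma sqrt_S_coef (R : rcfType) i j :
  Num.sqrt ((S i j)%:R * (S j i)%:R / (#|cellset cell i|%:R * #|cellset cell j|%:R))
  = (S i j)%:R / #|cellset cell j|%:R :> R.
Proof.
have Ni := cell_size_neq0 Sreg.1 R i; have Nj := cell_size_neq0 Sreg.1 R j.
have -> : (S i j)%:R * (S j i)%:R / (#|cellset cell i|%:R * #|cellset cell j|%:R)
          = ((S i j)%:R / #|cellset cell j|%:R) ^+ 2 :> R.
  have -> : (S j i)%:R = #|cellset cell i|%:R * (S i j)%:R / #|cellset cell j|%:R :> R.
    by rewrite cell_size_mulS mulrAC divff // mul1r.
  by field; apply/andP.
by rewrite sqrtr_sqr ger0_norm // divr_ge0 // ler0n.
Qed.

Lemma bulk_eigenvalue_of_eigenvector (R : numFieldType) (r : R) (q x : 'I_n -> R) :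
  (forall v, nbr_sum adj q v = r * q v) -> cell_centered cell x ->
  \sum_u q u * x u != 0 -> bulk_eigenvalue adj cell r.
Proof.
move=> q_eigen x_centered qx_neq0.
set m := cell_mean cell q; set u := cell_center cell q.
have u_centered : cell_centered cell u := cell_center_centered Sreg.1 q.
(* Since A preserves W, the defect of [u] as an eigenvector is constant on
   cells; since A preserves W^perp, it is centered, hence zero. *)
pose h l := \sum_j (S l j)%:R * m j - r * m l.
have defect v : nbr_sum adj u v - r * u v = - h (cell v).
  rewrite /u /cell_center nbr_sumB q_eigen nbr_sum_cell /h -/m; ring.
have h0 : forall l, h l = 0.
  apply: (cell_const_centered Sreg.1) => j.
  rewrite (eq_bigr (fun v => - (nbr_sum adj u v - r * u v))) => [|v _]; last first.
    by rewrite defect opprK.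
  by rewrite sumrN sumrB -mulr_sumr nbr_sum_centered // u_centered mulr0 subrr oppr0.
apply: (bulk_eigenvalue_of_fun (z := u)) => //.
  by move=> v; apply/eqP; rewrite -subr_eq0 defect h0 oppr0.
have ux : \sum_v u v * x v = \sum_v q v * x v.
  rewrite /u /cell_center (eq_bigr (fun v => q v * x v - x v * m (cell v))).
    by rewrite sumrB (centered_orthogonal m x_centered) subr0.
  by move=> v _; rewrite -/m mulrBl (mulrC (m _)).
apply/existsP; apply: contraNT qx_neq0 => /existsPn u0.
by rewrite -ux big1 // => v _; rewrite (eqP (negPn (u0 v))) mul0r.
Qed.

Lemma sqr_norm_nbr_sum_le (R : rcfType) (lam : R) (x : 'I_n -> R) :
  (forall l, bulk_eigenvalue adj cell l -> `|l| <= lam) -> cell_centered cell x ->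
  \sum_u nbr_sum adj x u ^+ 2 <= lam ^+ 2 * \sum_u x u ^+ 2.
Proof.
move=> bulk_le x_centered.
set A := adjmx R adj; set X := \col_u x u.
have sqr_normE (y : 'cV[R]_n) : (y^T *m y) 0 0 = \sum_u y u 0 ^+ 2.
  by rewrite mxE; apply: eq_bigr => u _; rewrite mxE expr2.
have AX u : (A *m X) u 0 = nbr_sum adj x u.
  by rewrite mxE; apply: eq_bigr => w _; rewrite !mxE.
have -> : \sum_u nbr_sum adj x u ^+ 2 = ((A *m X)^T *m (A *m X)) 0 0.
  by rewrite sqr_normE; apply: eq_bigr => u _; rewrite AX.
have -> : \sum_u x u ^+ 2 = (X^T *m X) 0 0.
  by rewrite sqr_normE; apply: eq_bigr => u _; rewrite mxE.
apply: symmetric_sqr_norm_le => [|p r p_eigen px_neq0].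
  by apply/matrixP => a b; rewrite !mxE adj_sym.
apply/bulk_le/(@bulk_eigenvalue_of_eigenvector _ r (p 0) x) => //.
  move=> v; move/matrixP/(_ 0 v): p_eigen; rewrite !mxE => <-.
  by apply: eq_bigr => w _; rewrite !mxE adj_sym mulrC.
by move: px_neq0; rewrite mxE; congr (_ != 0); apply: eq_bigr => w _; rewrite mxE.
Qed.

Lemma nE_decomposition (R : numFieldType) (B C : {set 'I_n}) :
  (nE adj B C)%:R =
    \sum_i \sum_j (S i j)%:R / #|cellset cell j|%:R
                   * #|B :&: cellset cell i|%:R * #|C :&: cellset cell j|%:R
    + \sum_u cell_center cell (fun u => (u \in B)%:R) u
             * nbr_sum adj (cell_center cell (fun v => (v \in C)%:R)) u :> R.
Proof.
set xB := cell_center cell _; set xC := cell_center cell _; set Y := nbr_sum adj xC.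
pose mB := cell_mean cell (fun u => (u \in B)%:R : R).
pose mC := cell_mean cell (fun u => (u \in C)%:R : R).
pose h i := \sum_j (S i j)%:R * mC j.
have B_split u : (u \in B)%:R = mB (cell u) + xB u by rewrite /xB /cell_center addrC subrK.
have C_split u : nbr_sum adj (fun v => (v \in C)%:R) u = h (cell u) + Y u.
  by rewrite /Y /xC /cell_center nbr_sumB nbr_sum_cell addrC subrK.
rewrite nE_nbr_sum (eq_bigr (fun u => mB (cell u) * h (cell u) + xB u * h (cell u)
                                     + (Y u * mB (cell u) + xB u * Y u))); last first.
  by move=> u _; rewrite B_split C_split; ring.
rewrite !big_split /= (centered_orthogonal h (cell_center_centered Sreg.1 _)) addr0.
rewrite (centered_orthogonal mB (nbr_sum_centered (cell_center_centered Sreg.1 _))) add0r.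
congr (_ + _); rewrite (sum_by_cell cell); apply: eq_bigr => i _.
rewrite (eq_bigr (fun _ => mB i * h i)) => [|u /eqP->] //.
rewrite sum_cell_const /h mulr_sumr -[LHS]mulr_natr mulr_suml; apply: eq_bigr => j _.
rewrite /mB /mC !cell_mean_indicator /cell_density.
by field; rewrite !(cell_size_neq0 Sreg.1).
Qed.

Lemma bulk_edge_term_le (R : rcfType) (lam : R) (B C : {set 'I_n}) :
  (forall l, bulk_eigenvalue adj cell l -> `|l| <= lam) -> 0 <= lam ->
  `|\sum_u cell_center cell (fun u => (u \in B)%:R) u
           * nbr_sum adj (cell_center cell (fun v => (v \in C)%:R)) u|
  <= lam * n%:R * Num.sqrt (#|B|%:R / n%:R
                            * \sum_j cell_density cell R C j * (1 - cell_density cell R C j)).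
Proof.
move=> bulk_le lam_ge0.
set xB := cell_center cell _; set xC := cell_center cell _.
set V := \sum_(j < k) _.
have V_ge0 : 0 <= V by apply: sumr_ge0 => j _; exact: (cell_density_var_ge0 Sreg.1).
have xB2 : \sum_u xB u ^+ 2 <= #|B|%:R := sum_sqr_center_indicator_le_card Sreg.1 R B.
have xC2 : \sum_u xC u ^+ 2 <= n%:R * V := sum_sqr_center_indicator_le Sreg.1 R C.
have AxC2 := sqr_norm_nbr_sum_le bulk_le (cell_center_centered Sreg.1 (fun v => (v \in C)%:R)).
rewrite -ler_sqr ?nnegrE ?normr_ge0 ?mulr_ge0 ?sqrtr_ge0 ?ler0n //.
rewrite real_normK ?num_real //; apply: le_trans (CauchySchwarz_sum _ _) _.
apply: le_trans (_ : _ <= #|B|%:R * (lam ^+ 2 * (n%:R * V))) _.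
  apply: ler_pM => //; try by apply: sumr_ge0 => u _; apply: sqr_ge0.
  exact: le_trans AxC2 (ler_wpM2l (sqr_ge0 _) xC2).
rewrite !exprMn sqr_sqrtr ?mulr_ge0 ?invr_ge0 ?ler0n //.
have [-> | n_neq0] := eqVneq (n%:R : R) 0; first by rewrite !(mul0r, mulr0, expr0n).
by rewrite [X in _ <= X](_ : _ = #|B|%:R * (lam ^+ 2 * (n%:R * V))) //; field.
Qed.

End SRegularGraph.

Theorem mainTheorem9 (R : rcfType) (n k : nat) (adj : rel 'I_n)
    (cell : 'I_n -> 'I_k) (S : 'M[nat]_k) (lamB : R) (B C : {set 'I_n}) :
  simple_connected_graph adj ->
  S_regular adj cell S ->
  (k < n)%N ->
  (exists l, bulk_eigenvalue adj cell l /\ `|l| = lamB) ->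
  (forall l, bulk_eigenvalue adj cell l -> `|l| <= lamB) ->
  let ni := fun i : 'I_k => (#|cellset cell i|)%:R : R in
  let Bi := fun i : 'I_k => (#|B :&: cellset cell i|)%:R : R in
  let Cj := fun j : 'I_k => (#|C :&: cellset cell j|)%:R : R in
  let c := fun i : 'I_k => Cj i / ni i in
  let b := (#|B|)%:R / (n%:R : R) in
  `| (nE adj B C)%:R
     - \sum_(i < k) \sum_(j < k)
         Num.sqrt (((S i j)%:R * (S j i)%:R) / (ni i * ni j)) * Bi i * Cj j |
  <= lamB * n%:R * Num.sqrt (b * \sum_(i < k) c i * (1 - c i)).
Proof.
move=> [adj_sym _] Sreg _ [l0 [_ l0_lamB]] bulk_le /=.
rewrite (nE_decomposition adj_sym Sreg).
under eq_bigr do under eq_bigr do rewrite (sqrt_S_coef adj_sym Sreg).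
rewrite addrAC subrr add0r.
apply: (bulk_edge_term_le adj_sym Sreg) => //.
by rewrite -l0_lamB normr_ge0.
Qed.
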